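(* Let $\alpha,\beta\in\mathbb{R}^n_{>}$. Then $\alpha$-GSP has an efficient ex-post equilibrium on type space $\Theta^\beta$ if and only if $n\le 2$ or $k\le 1$; this holds even if $\alpha=\beta$.
   Context: Sponsored search setting: agents $N=\{1,\dots,n\}$, slots $1,\dots,k$ with $k\le n$; an outcome assigns agents to distinct positions, position $j\le k$ meaning slot $j$, others getting nothing (value 0); utilities quasilinear. $\mathbb{R}^n_{>}$: vectors $\alpha$ with $1=\alpha_1>\dots>\alpha_k>0$ and $\alpha_j=0$ for $j>k$. $\Theta^\beta$: type profiles in which each agent $i$ has a value $v_i(\theta_i)\ge0$ (all nonnegative values possible) and values slot $j$ at $\beta_j v_i(\theta_i)$. $\alpha$-GSP: each agent submits $b_i\ge0$ (bid $\alpha_j b_i$ on slot $j$ in GSP); agents are ranked by $b_i$ (ties arbitrary), the rank-$j$ agent ($j\le k$) gets slot $j$ and pays $\alpha_j$ times the $(j+1)$-st highest submitted value ($0$ if none). Incomplete information: a strategy of agent $i$ is a function $s_i$ from its types to submissions $b_i\ge0$. A strategy profile $s$ is an ex-post equilibrium on $\Theta^\beta$ if for every $\theta\in\Theta^\beta$ and every agent $i$, no other submission gives $i$ strictly higher utility against $s_{-i}(\theta_{-i})$; it is efficient if for every $\theta\in\Theta^\beta$ the resulting assignment maximizes total true value. *)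

From HB Require Import structures.
From mathcomp Require Import all_boot all_order all_algebra all_fingroup.
From mathcomp Require Import reals.
Set Implicit Arguments. Unset Strict Implicit. Unset Printing Implicit Defensive.
Import Order.TTheory GRing.Theory Num.Theory.
Local Open Scope ring_scope.

(* alpha in R^n_> with k slots; 0-based positions: alpha 0 = 1 > alpha 1 > ...
   > alpha (k-1) > 0 and alpha j = 0 for j >= k (positions >= n are unused). *)
Definition Rn_gt (R : realType) (n k : nat) (a : nat -> R) : Prop :=
  [/\ (k <= n)%N, a 0%N = 1,
      (forall j : nat, (j.+1 < k)%N -> a j.+1 < a j),
      (forall j : nat, (j < k)%N -> 0 < a j) &
      (forall j : nat, (k <= j)%N -> a j = 0)].

(* A tie-breaking rule: maps a bid vector to a ranking (agent i gets
   0-based position tb b i) that sorts the bids non-increasingly. *)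
Definition valid_tiebreak (R : realType) (n : nat)
    (tb : ('I_n -> R) -> {perm 'I_n}) : Prop :=
  forall (b : 'I_n -> R) (i j : 'I_n), (tb b i < tb b j)%N -> b j <= b i.

(* Bid of the agent ranked just below agent i (0 if none), i.e. the
   ((pos i)+2)-nd highest submitted value in 1-based terms. *)
Definition next_bid (R : realType) (n : nat) (s : {perm 'I_n}) (b : 'I_n -> R)
    (i : 'I_n) : R :=
  oapp (fun p : 'I_n => b ((s^-1)%g p)) 0 (insub (s i).+1 : option 'I_n).

Definition gsp_util (R : realType) (n : nat) (alpha beta : nat -> R)
    (tb : ('I_n -> R) -> {perm 'I_n}) (b : 'I_n -> R) (i : 'I_n) (v : R) : R :=
  beta (tb b i) * v - alpha (tb b i) * next_bid (tb b) b i.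

(* Strategies: types in Theta^beta are identified with values v >= 0. *)
Definition strategy_ok (R : realType) (n : nat) (s : 'I_n -> R -> R) : Prop :=
  forall (i : 'I_n) (v : R), 0 <= v -> 0 <= s i v.

Definition nonneg_profile (R : realType) (n : nat) (v : 'I_n -> R) : Prop :=
  forall i, 0 <= v i.

Definition bids_of (R : realType) (n : nat) (s : 'I_n -> R -> R) (v : 'I_n -> R)
  : 'I_n -> R := fun j => s j (v j).

Definition deviate (R : realType) (n : nat) (b : 'I_n -> R) (i : 'I_n) (x : R)
  : 'I_n -> R := fun j => if j == i then x else b j.

Definition expost_eq (R : realType) (n : nat) (alpha beta : nat -> R)
    (tb : ('I_n -> R) -> {perm 'I_n}) (s : 'I_n -> R -> R) : Prop :=
  forall v : 'I_n -> R, nonneg_profile v ->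
  forall (i : 'I_n) (x : R), 0 <= x ->
    gsp_util alpha beta tb (deviate (bids_of s v) i x) i (v i)
      <= gsp_util alpha beta tb (bids_of s v) i (v i).

Definition total_value (R : realType) (n : nat) (beta : nat -> R)
    (s : {perm 'I_n}) (v : 'I_n -> R) : R :=
  \sum_(i < n) beta (s i) * v i.

Definition efficient (R : realType) (n : nat) (beta : nat -> R)
    (tb : ('I_n -> R) -> {perm 'I_n}) (s : 'I_n -> R -> R) : Prop :=
  forall v : 'I_n -> R, nonneg_profile v ->
  forall t : {perm 'I_n}, total_value beta t v <= total_value beta (tb (bids_of s v)) v.

(* Slots are 0-based, so beta 1 and alpha 1 belong to the second slot.
   For k = 1, alpha-GSP is the second-price auction and truthful bidding works.
   For n = k = 2, bidding (1 - beta 1) v charges the winner exactly the value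
   the loser would gain by swapping slots, so neither agent wants to swap.
   For n >= 3 and k >= 2 write c = 1 - beta 1 and a = alpha 1. Efficiency puts
   the two highest values T > M into slots 0 and 1. M must not gain by
   outbidding T, which bounds T's bid from below, s_T(v_T) >= c v_M + a s_L(v_L)
   for any third agent L; T must not gain by dropping to slot 1, which bounds
   M's bid from above, s_M(v_M) <= c v_T + a K when K bounds all other bids.
   Chaining these bounds over three agents gives a c (Z - 1) <= 2 c + a K for
   arbitrarily large Z. *)

From HB Require Import structures.
From mathcomp Require Import all_boot all_order all_algebra all_fingroup.
From mathcomp Require Import reals ring lra zify.
Import Order.TTheory GRing.Theory Num.Theory.
Local Open Scope ring_scope.
Set Implicit Arguments. Unset Strict Implicit.

Lemma perm_val_eq n (σ : {perm 'I_n}) i j : (σ i == σ j :> nat) = (i == j).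
Proof. by rewrite val_eqE (inj_eq perm_inj). Qed.

Lemma Rn_gt_k_gt0 (R : realType) n k (a : nat -> R) : Rn_gt n k a -> (0 < k)%N.
Proof.
case=> _ a0 _ _ a_zero; rewrite lt0n; apply/negP => /eqP k0.
by move: a0; rewrite a_zero ?k0 // => /eqP; rewrite eq_sym oner_eq0.
Qed.

Lemma Rn_gt_lt (R : realType) n k (a : nat -> R) : Rn_gt n k a ->
  forall i j, (i < j)%N -> (i < k)%N -> a j < a i.
Proof.
case=> _ _ a_dec a_pos a_zero i; elim=> // j IHj.
rewrite ltnS leq_eqVlt => /orP[/eqP <- | ij] ik.
  by case: (ltnP i.+1 k) => [/a_dec // | ?]; rewrite a_zero // a_pos.
case: (ltnP j.+1 k) => [jk | ?]; last by rewrite a_zero // a_pos.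
exact: lt_trans (a_dec _ jk) (IHj ij ik).
Qed.

Lemma next_bid_inside (R : realType) n (σ : {perm 'I_n}) (b : 'I_n -> R) i
    (h : ((σ i).+1 < n)%N) : next_bid σ b i = b (σ^-1 (Ordinal h))%g.
Proof. by rewrite /next_bid insubT. Qed.

Lemma next_bid_last (R : realType) n (σ : {perm 'I_n}) (b : 'I_n -> R) i :
  (n <= (σ i).+1)%N -> next_bid σ b i = 0.
Proof. by move=> h; rewrite /next_bid insubF //; rewrite ltnNge h. Qed.

Lemma next_bid_ge0 (R : realType) n (σ : {perm 'I_n}) (b : 'I_n -> R) i :
  (forall j, 0 <= b j) -> 0 <= next_bid σ b i.
Proof. by move=> b_ge0; rewrite /next_bid; case: insub => /=. Qed.

Lemma next_bid_le (R : realType) n (σ : {perm 'I_n}) (b : 'I_n -> R) i B :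
  0 <= B -> (forall j, (σ i < σ j)%N -> b j <= B) -> next_bid σ b i <= B.
Proof.
move=> B_ge0 below; case: (ltnP (σ i).+1 n) => h; last by rewrite next_bid_last.
by rewrite (next_bid_inside _ h); apply: below; rewrite permKV.
Qed.

Lemma perm0_lt n (σ : {perm 'I_n}) i j : σ i = 0%N :> nat -> j != i -> (σ i < σ j)%N.
Proof. by move=> i0 ji; rewrite i0 lt0n -i0 perm_val_eq. Qed.

Lemma perm_lt_neq n (σ : {perm 'I_n}) i j : (σ i < σ j)%N -> j != i.
Proof. by apply: contraTneq => ->; rewrite ltnn. Qed.

Section TieBreak.
Variables (R : realType) (n : nat) (tb : ('I_n -> R) -> {perm 'I_n}).
Hypothesis Htb : valid_tiebreak tb.

Lemma tiebreak_le b i j : (tb b i <= tb b j)%N -> b j <= b i.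
Proof. by rewrite leq_eqVlt => /orP[|/Htb //]; rewrite perm_val_eq => /eqP ->. Qed.

Lemma tiebreak_lt b i j : b j < b i -> (tb b i < tb b j)%N.
Proof. by move=> ji; rewrite ltnNge; apply: contraTN ji => /tiebreak_le; rewrite leNgt. Qed.

Lemma tiebreak_top b i : (forall j, j != i -> b j < b i) -> tb b i = 0%N :> nat.
Proof.
move=> top; apply/eqP; apply/negPn/negP => i0.
have n0 : (0 < n)%N by apply: leq_ltn_trans (ltn_ord i).
set u := ((tb b)^-1 (Ordinal n0))%g.
have u0 : tb b u = Ordinal n0 by rewrite permKV.
have ui : u != i by apply: contraNneq i0 => <-; rewrite u0.
by have := tiebreak_lt (top u ui); rewrite u0 ltn0.
Qed.

Lemma tiebreak_second b i m : m != i -> b i < b m ->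
  (forall j, j != i -> j != m -> b j < b i) -> tb b i = 1%N :> nat.
Proof.
move=> mi im below.
have m_above : (tb b m < tb b i)%N := tiebreak_lt im.
have above j : (tb b j < tb b i)%N -> j = m.
  move=> ji; apply/eqP; apply: contraLR ji => jm; rewrite -leqNgt.
  by case: (eqVneq j i) => [-> // | ji]; apply/ltnW/tiebreak_lt/below.
have i_pos : (0 < tb b i)%N by apply: leq_ltn_trans m_above.
have n0 : (0 < n)%N by apply: leq_ltn_trans (ltn_ord i).
have hp : ((tb b i).-1 < n)%N by apply: leq_ltn_trans (leq_pred _) (ltn_ord _).
have := above ((tb b)^-1 (Ordinal n0))%g; have := above ((tb b)^-1 (Ordinal hp))%g.
rewrite !permKV /= ltn_predL i_pos => /(_ isT) e1 /(_ isT) e0.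
have := congr1 (fun j => val (tb b j)) (etrans e0 (esym e1)); rewrite /= !permKV /=.
lia.
Qed.

Lemma next_bid_ge b i j : (tb b i < tb b j)%N -> b j <= next_bid (tb b) b i.
Proof.
move=> ij; have h : ((tb b i).+1 < n)%N by apply: leq_ltn_trans ij (ltn_ord _).
by rewrite (next_bid_inside _ h); apply: tiebreak_le; rewrite permKV.
Qed.

Lemma gsp_util_outbid (alpha beta : nat -> R) b i x B w :
  alpha 0%N = 1 -> beta 0%N = 1 -> 0 <= B -> (forall j, j != i -> b j <= B) ->
  B < x -> w - B <= gsp_util alpha beta tb (deviate b i x) i w.
Proof.
move=> a0 b0 B_ge0 b_le bx; set b' := deviate b i x.
have b'E j : j != i -> b' j = b j by rewrite /b' /deviate => /negbTE ->.
have top : tb b' i = 0%N :> nat.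
  apply: tiebreak_top => j ji; rewrite b'E // /b' /deviate eqxx.
  exact: le_lt_trans (b_le j ji) bx.
rewrite /gsp_util top a0 b0 !mul1r lerD2l lerN2; apply: next_bid_le => // j ij.
by rewrite b'E ?b_le // (perm_lt_neq ij).
Qed.

Lemma gsp_util_underbid (alpha beta : nat -> R) b i m x B w :
  0 <= alpha 1%N -> 0 <= B -> m != i -> x < b m -> B < x ->
  (forall j, j != i -> j != m -> b j <= B) ->
  beta 1%N * w - alpha 1%N * B <= gsp_util alpha beta tb (deviate b i x) i w.
Proof.
move=> a1 B_ge0 mi xm Bx b_le; set b' := deviate b i x.
have b'E j : j != i -> b' j = b j by rewrite /b' /deviate => /negbTE ->.
have b'i : b' i = x by rewrite /b' /deviate eqxx.
have second : tb b' i = 1%N :> nat.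
  apply: (tiebreak_second mi); rewrite b'i ?b'E // => j ji jm.
  by rewrite b'E //; apply: le_lt_trans (b_le j ji jm) Bx.
rewrite /gsp_util second lerD2l lerN2; apply: ler_wpM2l => //.
apply: next_bid_le => // j ij.
have ji := perm_lt_neq ij.
have jm : j != m.
  by apply: contraTneq ij => ->; rewrite -leqNgt ltnW // tiebreak_lt // b'i b'E.
by rewrite b'E // b_le.
Qed.

End TieBreak.

Lemma total_value_tperm (R : realType) n (beta : nat -> R) (σ : {perm 'I_n})
    (v : 'I_n -> R) a b : a != b ->
  total_value beta (tperm a b * σ)%g v =
    total_value beta σ v + (beta (σ b) - beta (σ a)) * (v a - v b).
Proof.
move=> ab; rewrite /total_value (bigD1 a) // (bigD1 b) /= ?(eq_sym b) //.
rewrite [X in _ = X + _](bigD1 a) // (bigD1 b) /= ?(eq_sym b) //.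
rewrite !permM tpermL tpermR (eq_bigr (fun i => beta (σ i) * v i)); first by ring.
by move=> i /andP[ia ib]; rewrite permM tpermD // eq_sym.
Qed.

Section EfficientRanking.
Variables (R : realType) (n k : nat) (beta : nat -> R).
Variables (σ : {perm 'I_n}) (v : 'I_n -> R).
Hypothesis Hb : Rn_gt n k beta.
Hypothesis σ_max : forall t, total_value beta t v <= total_value beta σ v.

Lemma total_value_max_ordered a b : v b < v a -> (σ b < k)%N -> (σ a < σ b)%N.
Proof.
move=> vab bk; rewrite ltnNge; apply/negP => ba.
have ab : a != b by apply: contraTneq vab => ->; rewrite ltxx.
have {}ba : (σ b < σ a)%N by rewrite ltn_neqAle ba andbT perm_val_eq eq_sym.
have := σ_max (tperm a b * σ)%g; rewrite total_value_tperm //.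
have : 0 < (beta (σ b) - beta (σ a)) * (v a - v b).
  by apply: mulr_gt0; rewrite subr_gt0 // (Rn_gt_lt Hb).
lra.
Qed.

Lemma total_value_max_top_two T M : (1 < k)%N -> T != M -> v M < v T ->
  (forall j, j != T -> j != M -> v j < v M) ->
  σ T = 0%N :> nat /\ σ M = 1%N :> nat.
Proof.
move=> k1 TM vMT vM.
have n1 : (1 < n)%N by case: Hb => kn _ _ _ _; apply: leq_trans kn.
have n0 : (0 < n)%N := ltnW n1.
have vT j : j != T -> v j < v T.
  by move=> jT; case: (eqVneq j M) => [-> // | jM]; apply: lt_trans (vM j jT jM) vMT.
have σT : σ T = 0%N :> nat.
  set u := (σ^-1 (Ordinal n0))%g; have u0 : σ u = Ordinal n0 by rewrite permKV.
  case: (eqVneq u T) => [<- | uT]; first by rewrite u0.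
  have uk : (σ u < k)%N by rewrite u0; apply: ltnW.
  by have := total_value_max_ordered (vT u uT) uk; rewrite u0 ltn0.
split=> //.
set u := (σ^-1 (Ordinal n1))%g; have u1 : σ u = Ordinal n1 by rewrite permKV.
case: (eqVneq u M) => [<- | uM]; first by rewrite u1.
have uT : u != T by apply/eqP => uT; move: σT; rewrite -uT u1.
have uk : (σ u < k)%N by rewrite u1.
have := total_value_max_ordered (vM u uT uM) uk; rewrite u1 ltnS leqn0 -σT perm_val_eq.
by rewrite eq_sym (negbTE TM).
Qed.

End EfficientRanking.

Section Impossibility.
Variables (R : realType) (n k : nat) (alpha beta : nat -> R).
Variables (tb : ('I_n -> R) -> {perm 'I_n}) (s : 'I_n -> R -> R).
Hypotheses (Ha : Rn_gt n k alpha) (Hb : Rn_gt n k beta) (k_gt1 : (1 < k)%N).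
Hypotheses (Htb : valid_tiebreak tb) (Hs : strategy_ok s).
Hypotheses (Heq : expost_eq alpha beta tb s) (Hef : efficient beta tb s).

Let a0 : alpha 0%N = 1. Proof. by case: Ha. Qed.
Let b0 : beta 0%N = 1. Proof. by case: Hb. Qed.
Let a1_gt0 : 0 < alpha 1%N. Proof. by case: Ha => _ _ _ a_pos _; apply: a_pos. Qed.

Section TopTwo.
Variables (v : 'I_n -> R) (T M : 'I_n).
Hypotheses (v_ge0 : nonneg_profile v) (TM : T != M) (vMT : v M < v T).
Hypothesis vM : forall j, j != T -> j != M -> v j < v M.

Let b := bids_of s v.
Let b_ge0 j : 0 <= b j. Proof. exact: Hs. Qed.

Let top_two : tb b T = 0%N :> nat /\ tb b M = 1%N :> nat.
Proof. exact: (total_value_max_top_two Hb (Hef v_ge0) k_gt1 TM vMT vM). Qed.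

Lemma outbid_bound L : L != T -> L != M ->
  (1 - beta 1%N) * v M + alpha 1%N * s L (v L) <= s T (v T).
Proof.
move=> LT LM; have [σT σM] := top_two.
have L2 : (1 < tb b L)%N.
  have := perm_val_eq (tb b) L T; have := perm_val_eq (tb b) L M.
  by rewrite σT σM (negbTE LT) (negbTE LM); case: (nat_of_ord (tb b L)) => [|[|]].
have stay : gsp_util alpha beta tb b M (v M) <= beta 1%N * v M - alpha 1%N * b L.
  rewrite /gsp_util σM lerD2l lerN2 ler_pM2l //.
  by apply: (next_bid_ge Htb); rewrite σM.
have bT j : b j <= b T by apply: (tiebreak_le Htb); rewrite σT.
have bT1 : b T < b T + 1 by rewrite ltrDl.
have dev := gsp_util_outbid Htb (i:=M) (v M) a0 b0 (b_ge0 T) (fun j _ => bT j) bT1.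
have := Heq v_ge0 M (ltW (le_lt_trans (b_ge0 T) bT1)).
rewrite /b /bids_of in stay dev *; lra.
Qed.

Lemma underbid_bound B : 0 <= B -> (forall j, j != T -> j != M -> s j (v j) <= B) ->
  B < s M (v M) -> s M (v M) <= (1 - beta 1%N) * v T + alpha 1%N * B.
Proof.
move=> B_ge0 b_le BM; have [σT σM] := top_two.
have stay : gsp_util alpha beta tb b T (v T) <= v T - b M.
  rewrite /gsp_util σT a0 b0 !mul1r lerD2l lerN2.
  by apply: (next_bid_ge Htb); rewrite σT σM.
have MT : M != T by rewrite eq_sym.
have Bmid : B < (B + b M) / 2 by rewrite /b /bids_of in BM *; lra.
have midM : (B + b M) / 2 < b M by rewrite /b /bids_of in BM *; lra.
have dev := gsp_util_underbid Htb beta (v T) (ltW a1_gt0) B_ge0 MT midM Bmid b_le.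
have := Heq v_ge0 T (le_trans B_ge0 (ltW Bmid)).
rewrite /b /bids_of in stay dev *; lra.
Qed.

End TopTwo.

Section ThreeAgents.
Variables p q r : 'I_n.
Hypotheses (qp : q != p) (rp : r != p) (rq : r != q).

Definition profile3 (xp xq xr : R) : 'I_n -> R :=
  fun j => if j == p then xp else if j == q then xq else if j == r then xr else 0.

Lemma profile3_p xp xq xr : profile3 xp xq xr p = xp.
Proof. by rewrite /profile3 eqxx. Qed.

Lemma profile3_q xp xq xr : profile3 xp xq xr q = xq.
Proof. by rewrite /profile3 (negbTE qp) eqxx. Qed.

Lemma profile3_r xp xq xr : profile3 xp xq xr r = xr.
Proof. by rewrite /profile3 (negbTE rp) (negbTE rq) eqxx. Qed.

Lemma profile3_out xp xq xr j : j != p -> j != q -> j != r -> profile3 xp xq xr j = 0.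
Proof. by rewrite /profile3 => /negbTE -> /negbTE -> /negbTE ->. Qed.

Lemma profile3_ge0 xp xq xr : 0 <= xp -> 0 <= xq -> 0 <= xr ->
  nonneg_profile (profile3 xp xq xr).
Proof. by move=> *; rewrite /profile3 => j; do !case: ifP. Qed.

Lemma bid_ge_linear Z : 2 <= Z -> (1 - beta 1%N) * (Z - 1) <= s r Z.
Proof.
move=> Z2; set v := profile3 (Z - 1) (1 / 2) Z.
have v_ge0 : nonneg_profile v by apply: profile3_ge0; lra.
have vpr : v p < v r by rewrite /v profile3_p profile3_r; lra.
have vp j : j != r -> j != p -> v j < v p.
  move=> jr jp; rewrite /v profile3_p; case: (eqVneq j q) => [-> | jq].
    by rewrite profile3_q; lra.
  by rewrite profile3_out //; lra.
have qr : q != r by rewrite eq_sym.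
have := outbid_bound v_ge0 rp vpr vp qr qp; rewrite /v profile3_p profile3_q profile3_r.
have : 0 <= alpha 1%N * s q (1 / 2) by apply: mulr_ge0; [exact: ltW | apply: Hs; lra].
lra.
Qed.

Lemma bid_ge_chain Z y : 0 <= Z -> Z + 1 < y ->
  (1 - beta 1%N) * (y - 1) + alpha 1%N * s r Z <= s q y.
Proof.
move=> Z_ge0 Zy; set v := profile3 (y - 1) y Z.
have v_ge0 : nonneg_profile v by apply: profile3_ge0; lra.
have vpq : v p < v q by rewrite /v profile3_p profile3_q; lra.
have vp j : j != q -> j != p -> v j < v p.
  move=> jq jp; rewrite /v profile3_p; case: (eqVneq j r) => [-> | jr].
    by rewrite profile3_r; lra.
  by rewrite profile3_out //; lra.
have := outbid_bound v_ge0 qp vpq vp rq rp.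
by rewrite /v profile3_p profile3_q profile3_r.
Qed.

Let K := \sum_j s j (profile3 0 0 1 j).

Let K_ge0 : 0 <= K.
Proof. by apply: sumr_ge0 => j _; apply: Hs; apply: profile3_ge0; lra. Qed.

Lemma bid_le_chain y : 1 < y -> K < s q y -> s q y <= (1 - beta 1%N) * (y + 1) + alpha 1%N * K.
Proof.
move=> y1 Kq; set v := profile3 (y + 1) y 1.
have v_ge0 : nonneg_profile v by apply: profile3_ge0; lra.
have pq : p != q by rewrite eq_sym.
have vqp : v q < v p by rewrite /v profile3_p profile3_q; lra.
have vq j : j != p -> j != q -> v j < v q.
  move=> jp jq; rewrite /v profile3_q; case: (eqVneq j r) => [-> | jr].
    by rewrite profile3_r.
  by rewrite profile3_out //; lra.
have K_le j : j != p -> j != q -> s j (v j) <= K.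
  move=> jp jq; have -> : v j = profile3 0 0 1 j.
    case: (eqVneq j r) => [-> | jr]; first by rewrite /v !profile3_r.
    by rewrite /v !profile3_out.
  rewrite /K (bigD1 j) //= lerDl; apply: sumr_ge0 => i _; apply: Hs.
  by apply: profile3_ge0; lra.
have := underbid_bound v_ge0 pq vqp vq K_ge0 K_le.
by rewrite /v profile3_p profile3_q; apply.
Qed.

Lemma three_agents_contradiction : False.
Proof.
set a := alpha 1%N; set c := 1 - beta 1%N.
have c_gt0 : 0 < c.
  by rewrite /c subr_gt0 -b0 (Rn_gt_lt Hb) // (ltn_trans _ k_gt1).
have ac_gt0 : 0 < a * c by rewrite mulr_gt0.
(* Z makes a c (Z - 1) exceed 2 c + a K; y ranks q above r and pushes s_q(y)
   above K. *)
pose Z := 2 + (2 * c + a * K) / (a * c).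
have aK_ge0 : 0 <= a * K by rewrite mulr_ge0 // ltW.
have Z2 : 2 <= Z by rewrite lerDl divr_ge0 ?(ltW ac_gt0) //; lra.
have acZ : a * (c * (Z - 1)) = a * c + 2 * c + a * K.
  by rewrite /Z; field; rewrite !gt_eqF.
pose y := Z + 2 + K / c.
have cy : c * (y - 1) = c * (Z + 1) + K by rewrite /y; field; rewrite gt_eqF.
have low_r := bid_ge_linear Z2; rewrite -/c in low_r.
have a_low_r : a * (c * (Z - 1)) <= a * s r Z by rewrite ler_pM2l.
have Kc_ge0 : 0 <= K / c by rewrite divr_ge0 // ltW.
have Z_ge0 : 0 <= Z by lra.
have Zy : Z + 1 < y by rewrite /y; lra.
have low_q := bid_ge_chain Z_ge0 Zy; rewrite -/a -/c in low_q.
have a_sr : 0 <= a * s r Z by apply: mulr_ge0; [exact: ltW | apply: Hs; lra].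
have Kq : K < s q y.
  have : 0 < c * (Z + 1) by rewrite mulr_gt0 //; lra.
  lra.
have y1 : 1 < y by lra.
have up_q := bid_le_chain y1 Kq; rewrite -/a -/c in up_q.
have : c * (y + 1) = c * (y - 1) + 2 * c by ring.
lra.
Qed.

End ThreeAgents.

Lemma no_efficient_expost_eq : (2 < n)%N -> False.
Proof.
move=> n2; have n1 := ltnW n2; have n0 := ltnW n1.
by apply: (@three_agents_contradiction (Ordinal n0) (Ordinal n1) (Ordinal n2)).
Qed.

End Impossibility.

Section SingleSlot.
Variables (R : realType) (n : nat) (alpha beta : nat -> R).
Variable tb : ('I_n -> R) -> {perm 'I_n}.
Hypotheses (Ha : Rn_gt n 1 alpha) (Hb : Rn_gt n 1 beta) (Htb : valid_tiebreak tb).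

Lemma gsp_util_single_slot b i w : gsp_util alpha beta tb b i w =
  if tb b i == 0%N :> nat then w - next_bid (tb b) b i else 0.
Proof.
case: Ha Hb => [_ a0 _ _ a_zero] [_ b0 _ _ b_zero]; rewrite /gsp_util.
case: eqP => [-> | i0]; first by rewrite a0 b0 !mul1r.
have i_pos : (1 <= tb b i)%N by rewrite lt0n; apply/eqP.
by rewrite a_zero // b_zero // !mul0r subr0.
Qed.

Lemma total_value_single_slot (n_gt0 : (0 < n)%N) t v :
  total_value beta t v = v (t^-1 (Ordinal n_gt0))%g.
Proof.
case: Hb => _ b0 _ _ b_zero.
rewrite /total_value (bigD1 (t^-1 (Ordinal n_gt0))%g) //= permKV b0 mul1r big1 ?addr0 //.
move=> i it; rewrite b_zero ?mul0r // lt0n; apply: contra it => /eqP t0.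
by apply/eqP; apply: (canRL (permK t)); apply: val_inj.
Qed.

Let truthful : 'I_n -> R -> R := fun _ w => w.

Lemma truthful_expost_eq : expost_eq alpha beta tb truthful.
Proof.
move=> v v_ge0 i x x_ge0; rewrite !gsp_util_single_slot.
set b := bids_of truthful v; set b' := deviate b i x.
have b'E j : j != i -> b' j = b j by rewrite /b' /deviate => /negbTE ->.
have b'_ge0 j : 0 <= b' j by rewrite /b' /deviate; case: ifP.
case: ifP => [/eqP top' | _]; case: ifP => [_ | /negbT not_top] //.
- rewrite lerD2l lerN2; apply: next_bid_le => [|j ij]; first exact: next_bid_ge0.
  have ji := perm_lt_neq ij; rewrite -b'E //.
  by have := next_bid_ge Htb (perm0_lt top' ji).
- have n0 : (0 < n)%N by apply: leq_ltn_trans (ltn_ord i).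
  set u := ((tb b)^-1 (Ordinal n0))%g; have u0 : tb b u = Ordinal n0 by rewrite permKV.
  have ui : u != i by apply: contraNneq not_top => <-; rewrite u0.
  have iu : b i <= b u by apply: (tiebreak_le Htb); rewrite u0.
  have := next_bid_ge Htb (perm0_lt top' ui); rewrite b'E // subr_le0.
  exact: le_trans.
- rewrite subr_ge0; apply: next_bid_le => // j ij.
  exact: (tiebreak_le Htb (ltnW ij)).
Qed.

Lemma truthful_efficient : efficient beta tb truthful.
Proof.
move=> v _ t; have n0 : (0 < n)%N by case: Hb.
rewrite !(total_value_single_slot n0).
by apply: (tiebreak_le Htb (b := bids_of truthful v)); rewrite permKV.
Qed.

Lemma truthful_single_slot : exists s : 'I_n -> R -> R,
  [/\ strategy_ok s, expost_eq alpha beta tb s & efficient beta tb s].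
Proof. by exists truthful; split; [ | exact: truthful_expost_eq | exact: truthful_efficient]. Qed.

End SingleSlot.

Definition other (i : 'I_2) : 'I_2 := if i == ord0 then ord_max else ord0.

Lemma other0 : other ord0 = ord_max.
Proof. by rewrite /other eqxx. Qed.

Lemma other_neq i : other i != i.
Proof. by case: i => [[|[|]] ?]. Qed.

Lemma I2_other (i j : 'I_2) : j != i -> j = other i.
Proof. by case: i => [[|[|]] ?]; case: j => [[|[|]] ?] // _; apply/val_inj. Qed.

Lemma I2_neq0 (i : 'I_2) : i != 0%N :> nat -> i = 1%N :> nat.
Proof. by case: i => [[|[|]] ?]. Qed.

Lemma perm_I2_other0 (σ : {perm 'I_2}) i :
  (σ (other i) == 0%N :> nat) = ~~ (σ i == 0%N :> nat).
Proof.
have := perm_val_eq σ (other i) i; rewrite (negbTE (other_neq i)).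
by case: (σ i) => [[|[|]] ?]; case: (σ (other i)) => [[|[|]] ?].
Qed.

Section TwoAgents.
Variables (R : realType) (alpha beta : nat -> R) (tb : ('I_2 -> R) -> {perm 'I_2}).
Hypotheses (Ha : Rn_gt 2 2 alpha) (Hb : Rn_gt 2 2 beta) (Htb : valid_tiebreak tb).

Lemma gsp_util_two_agents b i w : gsp_util alpha beta tb b i w =
  if tb b i == 0%N :> nat then w - b (other i) else beta 1%N * w.
Proof.
case: Ha Hb => [_ a0 _ _ _] [_ b0 _ _ _]; rewrite /gsp_util.
case: eqP => [i0 | /eqP /I2_neq0 i1]; first last.
  by rewrite next_bid_last i1 // mulr0 subr0.
have h : ((tb b i).+1 < 2)%N by rewrite i0.
rewrite (next_bid_inside _ h); set u := ((tb b)^-1 _)%g.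
have ui : u != i by rewrite -(perm_val_eq (tb b)) /u permKV /= eq_sym ltn_eqF.
by rewrite i0 a0 b0 !mul1r -(I2_other ui).
Qed.

Lemma total_value_two_agents t v : total_value beta t v =
  if t (ord0 : 'I_2) == 0%N :> nat then v ord0 + beta 1%N * v ord_max
  else beta 1%N * v ord0 + v ord_max.
Proof.
case: Hb => _ b0 _ _ _; rewrite /total_value !big_ord_recl big_ord0 addr0.
have -> : lift ord0 ord0 = ord_max :> 'I_2 by apply: val_inj.
case: eqP => [t0 | /eqP /I2_neq0 t1].
  have tmax : t ord_max = 1%N :> nat.
    by apply: I2_neq0; rewrite -other0 perm_I2_other0 t0.
  by rewrite t0 tmax b0 mul1r.
have tmax : t ord_max = 0%N :> nat.
  by apply/eqP; rewrite -other0 perm_I2_other0 t1.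
by rewrite t1 tmax b0 mul1r addrC.
Qed.

Lemma tiebreak_two_agents b i :
  if tb b i == 0%N :> nat then b (other i) <= b i else b i <= b (other i).
Proof.
case: eqP => [i0 | /eqP i_ne0]; apply: (tiebreak_le Htb); first by rewrite i0.
by have /eqP -> : tb b (other i) == 0%N :> nat by rewrite perm_I2_other0.
Qed.

Let shaded : 'I_2 -> R -> R := fun _ w => (1 - beta 1%N) * w.

Lemma shaded_expost_eq : expost_eq alpha beta tb shaded.
Proof.
move=> v _ i x _; rewrite !gsp_util_two_agents /deviate (negbTE (other_neq i)).
move: (tiebreak_two_agents (bids_of shaded v) i); rewrite /bids_of /shaded.
case: (_ == _ :> nat); case: (_ == _ :> nat) => ranked; lra.
Qed.

Lemma shaded_efficient : efficient beta tb shaded.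
Proof.
move=> v _ t; rewrite !total_value_two_agents.
move: (tiebreak_two_agents (bids_of shaded v) ord0); rewrite other0 /bids_of /shaded.
case: (_ == _ :> nat); case: (_ == _ :> nat) => ranked; lra.
Qed.

Lemma shaded_two_agents : exists s : 'I_2 -> R -> R,
  [/\ strategy_ok s, expost_eq alpha beta tb s & efficient beta tb s].
Proof.
exists shaded; split; [ | exact: shaded_expost_eq | exact: shaded_efficient].
have [_ b0 b_dec _ _] := Hb.
have c_ge0 : 0 <= 1 - beta 1%N by rewrite subr_ge0 -b0 ltW // b_dec.
by move=> i w w_ge0; apply: mulr_ge0.
Qed.

End TwoAgents.

Unset Implicit Arguments. Set Strict Implicit.

Theorem theorem6 (R : realType) (n k : nat) (alpha beta : nat -> R)
    (tb : ('I_n -> R) -> {perm 'I_n}) :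
  Rn_gt n k alpha -> Rn_gt n k beta -> valid_tiebreak tb ->
  ((exists s : 'I_n -> R -> R,
       [/\ strategy_ok s, expost_eq alpha beta tb s & efficient beta tb s])
   <-> (n <= 2)%N \/ (k <= 1)%N).
Proof.
move=> Ha Hb Htb; split.
  case=> s [Hs Heq Hef]; case: (leqP n 2) => [|n_gt2]; first by left.
  case: (leqP k 1) => [|k_gt1]; first by right.
  by case: (no_efficient_expost_eq Ha Hb k_gt1 Htb Hs Heq Hef n_gt2).
have k_gt0 := Rn_gt_k_gt0 Hb; have k_le_n : (k <= n)%N by case: Ha.
case: (leqP k 1) => [k_le1 _ | k_gt1 [n_le2 | //]].
  have k1 : k = 1%N by lia.
  by subst k; apply: truthful_single_slot.
have [n2 k2] : n = 2%N /\ k = 2%N by lia.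
by subst n k; apply: shaded_two_agents.
Qed.
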